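(* Under the standing assumptions below: (i) if $e\in S$, $f\in S_2$ and $ef=f$, then $e\in S_2$; (ii) $S_1\cdot S_1\subseteq S_1\cup S_0$.
   Context: Standing assumptions: $S$ is a semilattice (commutative semigroup of idempotents), $0\le\delta<0.03$, and $\theta:S\to M_2(\mathbb C)$ satisfies $\|\theta(e)\theta(f)-\theta(ef)\|_{HS}\le\delta$ for all $e,f\in S$, where $\|A\|_{HS}=(\operatorname{tr}(A^*A))^{1/2}$. For $k\in\{0,1,2\}$, $S_k=\{x\in S:\ |\operatorname{tr}\theta(x)-k|<0.95\}$; these sets are pairwise disjoint and cover $S$. *)

From HB Require Import structures.
From mathcomp Require Import all_boot all_order all_algebra.
Set Implicit Arguments. Unset Strict Implicit. Unset Printing Implicit Defensive.
Import Order.TTheory GRing.Theory Num.Theory.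
Local Open Scope ring_scope.

Definition hs_norm (C : numClosedFieldType) (n : nat) (A : 'M[C]_n) : C :=
  sqrtC (\tr ((map_mx Num.conj A)^T *m A)).

Definition is_semilattice (S : Type) (mul : S -> S -> S) : Prop :=
  (forall x y z, mul x (mul y z) = mul (mul x y) z) /\
  (forall x y, mul x y = mul y x) /\
  (forall x, mul x x = x).

Definition in_Sk (C : numClosedFieldType) (S : Type) (theta : S -> 'M[C]_2)
  (k : nat) (x : S) : Prop :=
  `|\tr (theta x) - k%:R| < 95%:R / 100%:R.

From HB Require Import structures.
From mathcomp Require Import all_boot all_order all_algebra.
From mathcomp Require Import ring lra.
Set Implicit Arguments. Unset Strict Implicit. Unset Printing Implicit Defensive.
Import Order.TTheory GRing.Theory Num.Theory.
Local Open Scope ring_scope.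

(* Let X be a 2x2 complex matrix that is almost idempotent: ||X^2 - X||_HS <= d < 3/100.
   If l1, l2 are its eigenvalues, then mu_i = l_i^2 - l_i are the eigenvalues of X^2 - X,
   and the 2x2 Schur inequality |mu1|^2 + |mu2|^2 <= ||X^2 - X||_HS^2 forces each l_i to lie
   within (100/94) |mu_i| of 0 or 1; altogether the eigenvalues are within 1/20 of {0, 1}.
   Hence tr X is within 1/20 of some k in {0, 1, 2}, and at most one k satisfies
   |tr X - k| < 0.95.  If tr X is near 2, both eigenvalues are near 1, so det X is near 1.
   Part (i): for F = theta f, E = theta e with ||EF - F||_HS <= d, Cayley-Hamilton yields
     det F (tr F - 1) (tr E - 2) = (tr F (tr F - 1) - det F) tr N - tr (N M)
   with N = EF - F and M = F^2 - F, whose right-hand side is O(d); so tr E is near 2.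
   Part (ii): theta (xy) is almost idempotent, so xy lies in S_0, S_1 or S_2, and xy in S_2
   would put x in S_2 by (i) (as x (xy) = xy), contradicting x in S_1.
   All estimates are carried out in the real subfield realC of C, a real field on which
   lra/nra apply, through the real-valued modulus cabs. *)

Section RealSubfield.
Variable C : numClosedFieldType.

Definition realC := {x : C | x \is Num.real}.
HB.instance Definition _ := [isSub for (@sval C _ : realC -> C)].
HB.instance Definition _ := [Choice of realC by <:].
HB.instance Definition _ := [SubChoice_isSubIntegralDomain of realC by <:].
HB.instance Definition _ := [SubIntegralDomain_isSubField of realC by <:].

Let realC_le (x y : realC) := val x <= val y.
Let realC_lt (x y : realC) := val x < val y.
Let realC_norm (x : realC) : realC := Sub `|val x| (normr_real _).

Fact realC_le0_add x y : realC_le 0 x -> realC_le 0 y -> realC_le 0 (x + y).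
Proof. exact: addr_ge0. Qed.
Fact realC_le0_mul x y : realC_le 0 x -> realC_le 0 y -> realC_le 0 (x * y).
Proof. exact: mulr_ge0. Qed.
Fact realC_le0_anti x : realC_le 0 x -> realC_le x 0 -> x = 0.
Proof.
by rewrite /realC_le => x_ge0 x_le0; apply/val_inj/eqP; rewrite eq_le x_ge0 x_le0.
Qed.
Fact realC_subr_ge0 x y : realC_le 0 (y - x) = realC_le x y.
Proof. exact: subr_ge0. Qed.
Fact realC_le0_total x : realC_le 0 x || realC_le x 0.
Proof. exact: (valP x). Qed.
Fact realC_normN x : realC_norm (- x) = realC_norm x.
Proof. exact/val_inj/normrN. Qed.
Fact realC_ge0_norm x : realC_le 0 x -> realC_norm x = x.
Proof. by move=> x_ge0; apply/val_inj/ger0_norm. Qed.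
Fact realC_lt_def x y : realC_lt x y = (y != x) && realC_le x y.
Proof. exact: lt_def. Qed.

HB.instance Definition _ := Num.IntegralDomain_isLeReal.Build realC
  realC_le0_add realC_le0_mul realC_le0_anti realC_subr_ge0 realC_le0_total
  realC_normN realC_ge0_norm realC_lt_def.

Lemma realC_leE (x y : realC) : (x <= y) = (val x <= val y). Proof. by []. Qed.
Lemma realC_ltE (x y : realC) : (x < y) = (val x < val y). Proof. by []. Qed.

Lemma val_ratio (a b : nat) : val (a%:R / b%:R : realC) = a%:R / b%:R.
Proof. by rewrite fmorph_div !rmorph_nat. Qed.

Definition cabs (z : C) : realC := Sub `|z| (normr_real z).

Lemma cabs_ge0 z : 0 <= cabs z.
Proof. by rewrite realC_leE normr_ge0. Qed.
Lemma cabsM x y : cabs (x * y) = cabs x * cabs y.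
Proof. exact/val_inj/normrM. Qed.
Lemma cabsX x n : cabs (x ^+ n) = cabs x ^+ n.
Proof. by apply/val_inj; rewrite rmorphXn /= normrX. Qed.
Lemma cabsN x : cabs (- x) = cabs x.
Proof. exact/val_inj/normrN. Qed.
Lemma cabs1 : cabs 1 = 1.
Proof. exact/val_inj/normr1. Qed.
Lemma cabs_nat n : cabs n%:R = n%:R.
Proof. by apply/val_inj; rewrite rmorph_nat /= normr_nat. Qed.
Lemma cabsD x y : cabs (x + y) <= cabs x + cabs y.
Proof. exact: ler_normD. Qed.
Lemma cabsB x y : cabs (x - y) <= cabs x + cabs y.
Proof. by rewrite -(cabsN y) cabsD. Qed.
Lemma cabs_parallelogram a b :
  cabs (a + b) ^+ 2 + cabs (a - b) ^+ 2 = 2%:R * cabs a ^+ 2 + 2%:R * cabs b ^+ 2.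
Proof.
apply: val_inj; rewrite !rmorphD !rmorphM rmorph_nat /= -!expr2 !normCK.
by rewrite rmorphB rmorphD /=; ring.
Qed.

Lemma cabs_le_shift (z c : C) : cabs z <= cabs c + cabs (z - c).
Proof. by rewrite -{1}(subrK c z) addrC cabsD. Qed.
Lemma cabs_ge_shift (z c : C) : cabs c - cabs (z - c) <= cabs z.
Proof. by have := cabsB z (z - c); rewrite (_ : z - (z - c) = c); [lra | ring]. Qed.

End RealSubfield.

Lemma ord2_cases (i : 'I_2) : i = 0 \/ i = 1.
Proof. by case: i => [[|[|//]]] i_lt2; [left | right]; apply/val_inj. Qed.

Lemma lift_ord2 : lift ord0 ord0 = 1 :> 'I_2.
Proof. exact/val_inj. Qed.

Section Matrix2.
Variable R : comNzRingType.
Implicit Types A B X : 'M[R]_2.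

Lemma mxtrace2 X : \tr X = X 0 0 + X 1 1.
Proof. by rewrite /mxtrace !big_ord_recl big_ord0 addr0 lift_ord2. Qed.

Lemma det2 X : \det X = X 0 0 * X 1 1 - X 0 1 * X 1 0.
Proof.
rewrite (expand_det_row _ 0) !big_ord_recl big_ord0 addr0 /cofactor !det_mx11 !mxE.
rewrite expr0 expr1 mul1r mulN1r mulrN.
by congr (X _ _ * X _ _ - X _ _ * X _ _); apply/val_inj.
Qed.

Lemma mulmx2E A B i j : (A *m B) i j = A i 0 * B 0 j + A i 1 * B 1 j.
Proof. by rewrite mxE !big_ord_recl big_ord0 addr0 lift_ord2. Qed.

(* Cayley-Hamilton in the form used for part (i): multiplying N = (E - 1) F by
   (tr F - 1) adj F = (tr F (tr F - 1) - det F) - M and taking traces. *)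
Lemma trace_identity (E F : 'M[R]_2) :
  let N := E *m F - F in let M := F *m F - F in
  \det F * (\tr F - 1) * (\tr E - 2%:R) =
  (\tr F * (\tr F - 1) - \det F) * \tr N - \tr (N *m M).
Proof. by rewrite /= !mxtrace2 !det2 !(mulmx2E, mxE); ring. Qed.

End Matrix2.

Section RealEstimates.
Variable R : realFieldType.

Lemma small_factor (x y : R) : 0 <= x -> x <= y -> 1 <= x + y ->
  x * y < 3%:R / 100%:R -> 94%:R * x <= 100%:R * (x * y).
Proof.
move=> x_ge0 x_le_y sum_ge1 prod_small.
have half : 0 <= x * (y - 1 / 2%:R) by apply: mulr_ge0 => //; lra.
have x_small : x <= 6%:R / 100%:R by nra.
have y_large : 0 <= x * (y - 94%:R / 100%:R) by apply: mulr_ge0 => //; lra.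
nra.
Qed.

Lemma defect_sum_bound (a b x y d : R) : 0 <= a -> 0 <= b -> 0 <= d ->
  94%:R * x <= 100%:R * a -> 94%:R * y <= 100%:R * b ->
  a ^+ 2 + b ^+ 2 <= d ^+ 2 -> d < 3%:R / 100%:R -> 20%:R * (x + y) < 1.
Proof.
move=> a_ge0 b_ge0 d_ge0 xa yb sq_le d_small.
have sum_sq : (a + b) ^+ 2 <= 2%:R * d ^+ 2 by have := sqr_ge0 (a - b); nra.
have d_sq : d ^+ 2 <= 9%:R / 10000%:R.
  by rewrite expr2 (le_trans (ler_pM d_ge0 d_ge0 (ltW d_small) (ltW d_small))) //; lra.
have sum_small : a + b < 47%:R / 1000%:R.
  rewrite ltNge; apply/negP => large.
  have : 47%:R / 1000%:R * (47%:R / 1000%:R) <= (a + b) * (a + b).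
    by apply: ler_pM => //; lra.
  by rewrite -expr2; lra.
lra.
Qed.

(* The final estimate of part (i): a, b are |det F|, |tr F - 1|, K bounds the cofactor
   term, p = |tr N|, q = |tr (N M)| and x = |tr E - 2|. *)
Lemma trace_estimate (a b K p q x d : R) :
  9%:R / 10%:R <= a -> 19%:R / 20%:R <= b -> 0 <= x -> K <= 4%:R ->
  0 <= p -> p <= 2%:R * d -> q <= 4%:R * d ^+ 2 -> 0 <= d -> d < 3%:R / 100%:R ->
  a * b * x <= K * p + q -> x < 95%:R / 100%:R.
Proof.
move=> a_ge b_ge x_ge0 K_le p_ge0 p_le q_le d_ge0 d_small main.
have ab_ge : 171%:R / 200%:R <= a * b.
  by apply: le_trans (ler_pM _ _ a_ge b_ge) => //; lra.
have Kp_le : K * p <= 4%:R * p by apply: ler_wpM2r.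
have d_sq : d ^+ 2 <= 9%:R / 10000%:R.
  by rewrite expr2 (le_trans (ler_pM d_ge0 d_ge0 (ltW d_small) (ltW d_small))) //; lra.
have abx_ge : 171%:R / 200%:R * x <= a * b * x by apply: ler_wpM2r.
lra.
Qed.

End RealEstimates.

Section HilbertSchmidt.
Variable C : numClosedFieldType.
Implicit Types (A B : 'M[C]_2) (d : realC C).

Definition hs_sq A : realC C :=
  cabs (A 0 0) ^+ 2 + cabs (A 0 1) ^+ 2 + cabs (A 1 0) ^+ 2 + cabs (A 1 1) ^+ 2.

Lemma hs_normE A : hs_norm A = sqrtC (val (hs_sq A)).
Proof.
rewrite /hs_norm mxtrace2 !mulmx2E !mxE; congr sqrtC.
by rewrite !rmorphD !rmorphXn /= !normCK; ring.
Qed.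

Lemma hs_sq_ge0 A : 0 <= hs_sq A.
Proof. by rewrite !addr_ge0 // exprn_ge0 // cabs_ge0. Qed.

Lemma hs_sq_le A d : 0 <= d -> hs_norm A <= val d -> hs_sq A <= d ^+ 2.
Proof.
rewrite hs_normE realC_leE rmorphXn => d_ge0 hs_le.
have sq_ge0 : 0 <= val (hs_sq A) := hs_sq_ge0 A.
by rewrite -(sqrtCK (val (hs_sq A))) ler_pXn2r // nnegrE sqrtC_ge0.
Qed.

Lemma entry_le_hs_sq A i j : cabs (A i j) ^+ 2 <= hs_sq A.
Proof.
have := sqr_ge0 (cabs (A 0 0)); have := sqr_ge0 (cabs (A 0 1)).
have := sqr_ge0 (cabs (A 1 0)); have := sqr_ge0 (cabs (A 1 1)).
by rewrite /hs_sq; case: (ord2_cases i) => ->; case: (ord2_cases j) => ->; lra.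
Qed.

Lemma entry_le_hs A d i j : 0 <= d -> hs_sq A <= d ^+ 2 -> cabs (A i j) <= d.
Proof.
move=> d_ge0 hs_le; rewrite -(ler_pXn2r (n := 2)) ?nnegrE ?cabs_ge0 //.
exact: le_trans (entry_le_hs_sq A i j) hs_le.
Qed.

Lemma trace_le_hs A d : 0 <= d -> hs_sq A <= d ^+ 2 -> cabs (\tr A) <= 2%:R * d.
Proof.
move=> d_ge0 hs_le; rewrite mxtrace2.
apply: le_trans (cabsD _ _) _; rewrite mulr2n mulrDl mul1r.
by apply: lerD; apply: entry_le_hs.
Qed.

Lemma trace_mul_le_hs A B d : 0 <= d -> hs_sq A <= d ^+ 2 -> hs_sq B <= d ^+ 2 ->
  cabs (\tr (A *m B)) <= 4%:R * d ^+ 2.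
Proof.
move=> d_ge0 hsA hsB.
have entry_prod i j k l : cabs (A i j * B k l) <= d ^+ 2.
  by rewrite cabsM expr2 ler_pM ?cabs_ge0 ?entry_le_hs.
rewrite mxtrace2 !mulmx2E.
apply: le_trans (cabsD _ _) _; apply: le_trans (lerD (cabsD _ _) (cabsD _ _)) _.
have := entry_prod 0 0 0 0; have := entry_prod 0 1 1 0.
have := entry_prod 1 0 0 1; have := entry_prod 1 1 1 1; lra.
Qed.

End HilbertSchmidt.

Section Spectrum.
Variable C : numClosedFieldType.
Implicit Types (X M : 'M[C]_2) (d : realC C).

Lemma eigenvalues2 X : exists l1 l2 : C, l1 + l2 = \tr X /\ l1 * l2 = \det X.
Proof.
set t := \tr X; set r := sqrtC (t ^+ 2 - 4%:R * \det X).
have r_sq : r ^+ 2 = t ^+ 2 - 4%:R * \det X by rewrite sqrtCK.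
have two_neq0 : (2%:R : C) != 0 by rewrite pnatr_eq0.
exists ((t + r) / 2%:R), ((t - r) / 2%:R); split; first by field.
rewrite (_ : _ * _ = (t ^+ 2 - r ^+ 2) / 4%:R); last by field.
by rewrite r_sq; field.
Qed.

Lemma defect_eigenvalues X (l1 l2 : C) : l1 + l2 = \tr X -> l1 * l2 = \det X ->
  (l1 ^+ 2 - l1) + (l2 ^+ 2 - l2) = \tr (X *m X - X) /\
  (l1 ^+ 2 - l1) * (l2 ^+ 2 - l2) = \det (X *m X - X).
Proof.
move=> sum prod; split.
  transitivity ((l1 + l2) ^+ 2 - 2%:R * (l1 * l2) - (l1 + l2)); first by ring.
  by rewrite sum prod !mxtrace2 det2 !(mulmx2E, mxE); ring.
transitivity ((l1 * l2) * (l1 * l2 - (l1 + l2) + 1)); first by ring.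
by rewrite sum prod !mxtrace2 !det2 !(mulmx2E, mxE); ring.
Qed.

Lemma eigen_sq_le_hs M (mu1 mu2 : C) : mu1 + mu2 = \tr M -> mu1 * mu2 = \det M ->
  cabs mu1 ^+ 2 + cabs mu2 ^+ 2 <= hs_sq M.
Proof.
rewrite mxtrace2 det2 => sum prod.
have diff : (mu1 - mu2) ^+ 2 = (M 0 0 - M 1 1) ^+ 2 + 4%:R * (M 0 1 * M 1 0).
  transitivity ((mu1 + mu2) ^+ 2 - 4%:R * (mu1 * mu2)); first by ring.
  by rewrite sum prod; ring.
have diff_le : cabs (mu1 - mu2) ^+ 2 <=
    cabs (M 0 0 - M 1 1) ^+ 2 + 4%:R * (cabs (M 0 1) * cabs (M 1 0)).
  by rewrite -!cabsX diff -!cabsM -(cabs_nat _ 4) -cabsM cabsD.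
have := cabs_parallelogram mu1 mu2; have := cabs_parallelogram (M 0 0) (M 1 1).
have := sqr_ge0 (cabs (M 0 1) - cabs (M 1 0)).
rewrite sum /hs_sq; nra.
Qed.

Lemma near_zero_or_one (l : C) d : d < 3%:R / 100%:R -> cabs (l ^+ 2 - l) <= d ->
  exists k : bool, 94%:R * cabs (l - k%:R) <= 100%:R * cabs (l ^+ 2 - l).
Proof.
rewrite (_ : l ^+ 2 - l = l * (l - 1)); last by ring.
rewrite cabsM => d_small prod_le.
have prod_small : cabs l * cabs (l - 1) < 3%:R / 100%:R by apply: le_lt_trans d_small.
have sum_ge1 : 1 <= cabs l + cabs (l - 1).
  by have := cabsB l (l - 1); rewrite (_ : l - (l - 1) = 1) ?cabs1 //; ring.
have [le | lt] := lerP (cabs l) (cabs (l - 1)).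
  by exists false; rewrite subr0; apply: (@small_factor (realC C)) => //; apply: cabs_ge0.
exists true; rewrite /= mulr1n [cabs l * _]mulrC.
apply: (@small_factor (realC C)).
- exact: cabs_ge0.
- exact: ltW.
- by rewrite addrC.
- by rewrite mulrC.
Qed.

End Spectrum.

Section AlmostIdempotent.
Variable C : numClosedFieldType.
Implicit Types (X E F : 'M[C]_2) (d : realC C).

Lemma almost_idempotent_spectrum X d : 0 <= d -> d < 3%:R / 100%:R ->
  hs_norm (X *m X - X) <= val d ->
  exists (l1 l2 : C) (k1 k2 : bool), [/\ l1 + l2 = \tr X, l1 * l2 = \det X &
    20%:R * (cabs (l1 - k1%:R) + cabs (l2 - k2%:R)) < 1].
Proof.
move=> d_ge0 d_small /(hs_sq_le d_ge0) hs_le.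
have [l1 [l2 [sum prod]]] := eigenvalues2 X.
have [defect_sum defect_prod] := defect_eigenvalues sum prod.
have sq_le := le_trans (eigen_sq_le_hs defect_sum defect_prod) hs_le.
have mu1_ge0 := cabs_ge0 (l1 ^+ 2 - l1); have mu2_ge0 := cabs_ge0 (l2 ^+ 2 - l2).
have mu1_le : cabs (l1 ^+ 2 - l1) <= d by have := sqr_ge0 (cabs (l2 ^+ 2 - l2)); nra.
have mu2_le : cabs (l2 ^+ 2 - l2) <= d by have := sqr_ge0 (cabs (l1 ^+ 2 - l1)); nra.
have [k1 near1] := near_zero_or_one d_small mu1_le.
have [k2 near2] := near_zero_or_one d_small mu2_le.
exists l1, l2, k1, k2; split=> //.
exact: (defect_sum_bound mu1_ge0 mu2_ge0 d_ge0 near1 near2 sq_le d_small).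
Qed.

Lemma sum_dist_nat (t l1 l2 : C) (k1 k2 : nat) : l1 + l2 = t ->
  cabs (t - (k1 + k2)%:R) <= cabs (l1 - k1%:R) + cabs (l2 - k2%:R).
Proof.
move=> <-; rewrite natrD (_ : _ - _ = (l1 - k1%:R) + (l2 - k2%:R)); last by ring.
exact: cabsD.
Qed.

Lemma trace_near_nat X d : 0 <= d -> d < 3%:R / 100%:R ->
  hs_norm (X *m X - X) <= val d ->
  exists k : nat, (k <= 2)%N /\ 20%:R * cabs (\tr X - k%:R) < 1.
Proof.
move=> d_ge0 d_small idem.
have [l1 [l2 [k1 [k2 [sum _ small]]]]] := almost_idempotent_spectrum d_ge0 d_small idem.
exists (k1 + k2)%N; split; first by case: k1 k2 {sum small} => [] [].
have := sum_dist_nat k1 k2 sum; have := cabs_ge0 (\tr X - (k1 + k2)%:R); lra.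
Qed.

Lemma near_nat_unique (t : C) (j k : nat) : 20%:R * cabs (t - k%:R) < 1 ->
  cabs (t - j%:R) < 95%:R / 100%:R -> j = k.
Proof.
move=> near_k near_j; apply/eqP; apply: contraT => j_neq_k.
have dist_ge1 : 1 <= cabs (j%:R - k%:R : C).
  have [j_le_k | k_lt_j] := leqP j k.
    rewrite (_ : _ - _ = - (k - j)%:R); last by rewrite natrB // opprB.
    by rewrite cabsN cabs_nat (ler1n (realC C)) subn_gt0 ltn_neqAle j_neq_k.
  by rewrite -natrB ?cabs_nat ?(ler1n (realC C)) ?subn_gt0 // ltnW.
have := cabsB (t - k%:R) (t - j%:R); rewrite (_ : _ - _ = j%:R - k%:R); last by ring.
have := cabs_ge0 (t - k%:R); lra.
Qed.

(* An almost idempotent matrix in S_2 has both eigenvalues near 1: tr near 2, det near 1. *)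
Lemma near_identity F d : 0 <= d -> d < 3%:R / 100%:R ->
  hs_norm (F *m F - F) <= val d -> cabs (\tr F - 2%:R) < 95%:R / 100%:R ->
  20%:R * cabs (\tr F - 2%:R) < 1 /\ 10%:R * cabs (\det F - 1) < 1.
Proof.
move=> d_ge0 d_small idem near2.
have [l1 [l2 [k1 [k2 [sum prod small]]]]] := almost_idempotent_spectrum d_ge0 d_small idem.
have dist := sum_dist_nat k1 k2 sum.
have dist_ge0 := cabs_ge0 (\tr F - (k1 + k2)%:R).
have k_sum : 2%N = (k1 + k2)%N by apply: (near_nat_unique _ near2); lra.
have [k1_true k2_true] : k1 = true /\ k2 = true by case: k1 k2 k_sum {dist dist_ge0 small} => [] [].
rewrite k1_true k2_true /= mulr1n in small dist.
have u1 := cabs_ge0 (l1 - 1); have u2 := cabs_ge0 (l2 - 1).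
split; first lra.
rewrite (_ : \det F - 1 = (l1 - 1) * (l2 - 1) + (l1 - 1) + (l2 - 1)); last by rewrite -prod; ring.
have := cabsD ((l1 - 1) * (l2 - 1) + (l1 - 1)) (l2 - 1).
have := cabsD ((l1 - 1) * (l2 - 1)) (l1 - 1); rewrite cabsM; nra.
Qed.

Lemma almost_fixed_trace E F d : 0 <= d -> d < 3%:R / 100%:R ->
  hs_norm (F *m F - F) <= val d -> hs_norm (E *m F - F) <= val d ->
  cabs (\tr F - 2%:R) < 95%:R / 100%:R -> cabs (\tr E - 2%:R) < 95%:R / 100%:R.
Proof.
move=> d_ge0 d_small idem fixed nearF.
have [trF_near detF_near] := near_identity d_ge0 d_small idem nearF.
have hsM := hs_sq_le d_ge0 idem; have hsN := hs_sq_le d_ge0 fixed.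
have key := congr1 (@cabs C) (trace_identity E F); rewrite /= !cabsM in key.
set t := \tr F in trF_near key; set D := \det F in detF_near key.
have v_ge0 := cabs_ge0 (t - 2%:R); have w_ge0 := cabs_ge0 (D - 1).
have t1E : t - 1 - 1 = t - 2%:R by ring.
have D_ge : 9%:R / 10%:R <= cabs D.
  by have := cabs_ge_shift D 1; rewrite cabs1; lra.
have t1_ge : 19%:R / 20%:R <= cabs (t - 1).
  by have := cabs_ge_shift (t - 1) 1; rewrite cabs1 t1E; lra.
have K_le : cabs (t * (t - 1) - D) <= 4%:R.
  have t_le : cabs t <= 2%:R + cabs (t - 2%:R) by rewrite -(cabs_nat _ 2) cabs_le_shift.
  have t1_le : cabs (t - 1) <= 1 + cabs (t - 2%:R).
    by have := cabs_le_shift (t - 1) 1; rewrite cabs1 t1E.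
  have D_le : cabs D <= 1 + cabs (D - 1) by have := cabs_le_shift D 1; rewrite cabs1.
  have prod_le := ler_pM (cabs_ge0 _) (cabs_ge0 _) t_le t1_le.
  have := cabsB (t * (t - 1)) D; rewrite cabsM; nra.
apply: (@trace_estimate (realC C) _ _ _ _ _ _ d D_ge t1_ge (cabs_ge0 _) K_le (cabs_ge0 _)
  (trace_le_hs d_ge0 hsN) (trace_mul_le_hs d_ge0 hsN hsM) d_ge0 d_small).
by rewrite key; apply: le_trans (cabsB _ _) _; rewrite cabsM.
Qed.

End AlmostIdempotent.

Unset Implicit Arguments.

Theorem lemmal (C : numClosedFieldType) (S : Type) (mul : S -> S -> S)
  (delta : C) (theta : S -> 'M[C]_2) :
  is_semilattice mul ->
  0 <= delta -> delta < 3%:R / 100%:R ->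
  (forall e f : S, hs_norm (theta e *m theta f - theta (mul e f)) <= delta) ->
  (forall e f : S, in_Sk theta 2 f -> mul e f = f -> in_Sk theta 2 e) /\
  (forall x y : S, in_Sk theta 1 x -> in_Sk theta 1 y ->
     in_Sk theta 1 (mul x y) \/ in_Sk theta 0 (mul x y)).
Proof.
move=> [mulA [_ mulI]] delta_ge0 delta_small near_mult.
pose d : realC C := Sub delta (ger0_real delta_ge0).
have d_ge0 : 0 <= d by rewrite realC_leE.
have d_small : d < 3%:R / 100%:R by rewrite realC_ltE val_ratio.
have idem z : hs_norm (theta z *m theta z - theta z) <= val d.
  by have := near_mult z z; rewrite mulI.
have in_SkE k z : in_Sk theta k z <-> cabs (\tr (theta z) - k%:R) < 95%:R / 100%:R.
  by rewrite /in_Sk realC_ltE val_ratio.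
have absorb e f : in_Sk theta 2 f -> mul e f = f -> in_Sk theta 2 e.
  move=> /in_SkE near_f ef_f; apply/in_SkE.
  apply: (almost_fixed_trace d_ge0 d_small (idem f) _ near_f).
  by have := near_mult e f; rewrite ef_f.
split=> // x y /in_SkE x_S1 _.
have [k [k_le2 near_k]] := trace_near_nat d_ge0 d_small (idem (mul x y)).
have xy_Sk : in_Sk theta k (mul x y).
  by apply/in_SkE; have := cabs_ge0 (\tr (theta (mul x y)) - k%:R); lra.
case: k k_le2 xy_Sk {near_k} => [|[|[|//]]] _ xy_Sk; [by right | by left |].
(* xy in S_2 would force x in S_2 by part (i), since x (xy) = xy. *)
have /in_SkE x_S2 : in_Sk theta 2 x by apply: (absorb _ _ xy_Sk); rewrite mulA mulI.
have [j [_ near_j]] := trace_near_nat d_ge0 d_small (idem x).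
by have := near_nat_unique near_j x_S2; rewrite -(near_nat_unique near_j x_S1).
Qed.
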